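(* Let $\mathbb{P}$ be a product measure on $[0,\infty)^{E_H}$ with i.i.d. continuous marginals, and let $D>0$ satisfy $\mathbb{P}(\omega_e>D)\le1/5$. Call an edge $e$ open if $\omega_e\le D$. For $n\in\mathbb{N}$ let $B_n=[-n,n]\times[0,2n]$ and $A_n=B_n\setminus B_{n-\sqrt n}$. Then \[\sum_n\mathbb{P}\big(\text{there is no open half-circuit of edges in }A_n\text{ enclosing }(0,0)\big)<\infty.\]
   Context: $V_H=\{(x_1,x_2)\in\mathbb{Z}^2:x_2\ge0\}$ and $E_H$ is the set of nearest-neighbour edges with both endpoints in $V_H$. An open half-circuit is a path in $(V_H,E_H)$ whose initial and final endpoints lie on the first coordinate axis $\{(x,0):x\in\mathbb{Z}\}$ and all of whose edges are open; it encloses $(0,0)$ if $(0,0)$ lies in the bounded region between the path and the first coordinate axis. *)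

From HB Require Import structures.
From mathcomp Require Import all_boot all_order all_algebra.
From mathcomp Require Import all_classical all_reals all_analysis.
Set Implicit Arguments. Unset Strict Implicit. Unset Printing Implicit Defensive.
Import Order.TTheory GRing.Theory Num.Theory.
Local Open Scope ring_scope.
Local Open Scope classical_set_scope.

Definition vertex := (int * int)%type.

(* Edges: (x, y, false) is the horizontal edge {(x,y),(x+1,y)},
          (x, y, true)  is the vertical edge   {(x,y),(x,y+1)}.
   Every nearest-neighbour edge of Z^2 has exactly one such name. *)
Definition edge := (int * int * bool)%type.

(* E_H : edges with both endpoints in V_H. *)
Definition inEH (e : edge) : bool := 0 <= e.1.2.

Definition nn (v w : vertex) : bool := `|v.1 - w.1| + `|v.2 - w.2| == 1.

Definition edge_of (v w : vertex) : edge :=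
  if v.2 == w.2 then (Order.min v.1 w.1, v.2, false)
  else (v.1, Order.min v.2 w.2, true).

Definition inB {R : realType} (r : R) (v : vertex) : bool :=
  (`|(v.1)%:~R| <= r) && (0 <= (v.2)%:~R :> R) && ((v.2)%:~R <= 2 * r).

Definition inA {R : realType} (n : nat) (v : vertex) : bool :=
  inB (n%:R : R) v && ~~ inB (n%:R - Num.sqrt (n%:R) : R) v.

(* p = [v0; ...; vk] is an open half-circuit all of whose edges (i.e. all of
   whose vertices) lie in S: a nearest-neighbour path in (V_H, E_H), all
   edges open, with both endpoints on the first coordinate axis. *)
Definition open_half_circuit_in (isopen : edge -> bool) (S : vertex -> bool)
    (p : seq vertex) : bool :=
  match p with
  | [::] => false
  | v :: q =>
      [&& all (fun u => 0 <= u.2) p,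
          path (fun a b => nn a b && isopen (edge_of a b)) v q,
          v.2 == 0, (last v q).2 == 0 & all S p]
  end.

(* p encloses (0,0): (0,0) lies in the (closure of the) bounded region
   between p and the first axis; for a path in V_H with endpoints (a,0),(b,0)
   avoiding the origin this means exactly that a and b lie on opposite
   sides of 0. *)
Definition encloses_origin (p : seq vertex) : bool :=
  match p with
  | [::] => false
  | v :: q =>
      ((0, 0) \notin p) &&
      (((v.1 < 0) && (0 < (last v q).1)) || (((last v q).1 < 0) && (0 < v.1)))
  end.

Definition mutually_independent {d} {Omega : measurableType d} {R : realType}
    (P : probability Omega R) (omega : edge -> Omega -> R) : Prop :=
  forall (s : seq edge) (B : edge -> set R),
    uniq s -> all inEH s -> (forall e, measurable (B e)) ->
    P (\big[setI/setT]_(e <- s) (omega e @^-1` B e)) =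
    (\prod_(e <- s) P (omega e @^-1` B e))%E.

Definition no_enclosing_half_circuit {Omega : Type} {R : realType}
    (omega : edge -> Omega -> R) (D : R) (n : nat) : set Omega :=
  [set w | ~ exists p : seq vertex,
      open_half_circuit_in (fun e => omega e w <= D) (@inA R n) p
      && encloses_origin p].

(* Peierls argument.  Fix n >= 1, r = isqrt n and m = n - r; the integer
   annulus between the boxes B_n and B_m lies in A_n.  Colour a vertex of the
   annulus if an open path inside the annulus joins it to the left foot
   [-n, -m-1] x {0}.  If no open half-circuit in A_n encloses the origin, the
   right foot [m+1, n] x {0} stays uncoloured, and a parity (handshake) count
   over the unit faces of B_n yields a self-avoiding dual path from outside B_n
   to a face touching B_m that only crosses edges joining differently coloured
   vertices, hence closed edges.  Such a path has length at least r.  A union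
   bound over its O(n^2) starting faces and its 4^L direction words gives the
   probability bound C n^2 (4/5)^r, which is summable since r ~ sqrt n. *)

From HB Require Import structures.
From mathcomp Require Import all_boot all_order all_algebra.
From mathcomp Require Import all_classical all_reals all_analysis.
From mathcomp Require Import zify ring lra.
Import Order.TTheory GRing.Theory Num.Theory.
Local Open Scope ring_scope.

Set Implicit Arguments. Unset Strict Implicit. Unset Printing Implicit Defensive.

Lemma big_addb_shift (g : nat -> bool) L :
  \big[addb/false]_(i < L) g i.+1 = \big[addb/false]_(i < L) g i (+) g 0%N (+) g L.
Proof.
have shiftl : \big[addb/false]_(i < L.+1) g i = g 0%N (+) \big[addb/false]_(i < L) g i.+1.
  by rewrite big_ord_recl; congr (_ (+) _); apply: eq_bigr => i _; rewrite lift0.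
move: (big_ord_recr (idx := false) (op := addb) L g); rewrite shiftl /=.
by case: (g 0%N); case: (g L); case: (\big[addb/false]_(i < L) g i);
   case: (\big[addb/false]_(i < L) g i.+1).
Qed.

Lemma big_addb_telescope (f : nat -> bool) L :
  \big[addb/false]_(i < L) (f i (+) f i.+1) = f 0%N (+) f L.
Proof.
elim: L => [|L IH]; first by rewrite big_ord0 addbb.
rewrite big_ord_recr /= IH.
by case: (f 0%N); case: (f L); case: (f L.+1).
Qed.

Lemma big_addb_interior (g : nat -> bool) L :
  \big[addb/false]_(i < L.+2) ((0 < i)%N && (i <= L)%N && g i) =
  \big[addb/false]_(i < L) g i.+1.
Proof.
rewrite big_ord_recl /= big_ord_recr /= /bump /= add1n ltnn /= addbF.
by apply: eq_bigr => i _; rewrite /bump /= add1n ltn_ord.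
Qed.

Lemma path_andb_pairmap (T U : Type) (e : rel T) (f : T -> T -> U) (a : pred U) x p :
  path (fun y z => e y z && a (f y z)) x p = path e x p && all a (pairmap f x p).
Proof.
elim: p x => //= y p IH x; rewrite IH.
by case: (e x y); case: (a (f x y)); case: (path e y p).
Qed.

Lemma path_lipschitz (T : Type) (e : rel T) (f : T -> int) :
  (forall a b, e a b -> f b <= f a + 1) ->
  forall x p, path e x p -> f (last x p) <= f x + (size p)%:Z.
Proof.
move=> lip x p; elim: p x => [|y p IH] x /=; first by lia.
by move=> /andP [/lip exy /IH]; lia.
Qed.

Lemma path_all_rhs (T : Type) (e : rel T) (a : pred T) x p :
  (forall y z, e y z -> a z) -> path e x p -> all a p.
Proof.
by move=> ea; elim: p x => [|y p IH] x //= /andP [/ea -> /IH ->].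
Qed.

Lemma mem_pairmap_path (T U : eqType) (e : rel T) (f : T -> T -> U) x p z :
  path e x p -> z \in pairmap f x p ->
  exists a b, [/\ a \in x :: p, b \in x :: p, e a b & z = f a b].
Proof.
elim: p x => [|y p IH] x //= /andP [exy pp]; rewrite inE => /orP [/eqP ->|zp].
  by exists x, y; rewrite !inE !eqxx orbT.
have [a [b [ap bp eab ->]]] := IH y pp zp.
by exists a, b; split => //; rewrite inE ?ap ?bp orbT.
Qed.

Lemma pairmap_uniq (T U : eqType) (e : rel T) (f : T -> T -> U) x p :
  (forall a b a' b', e a b -> e a' b' -> f a b = f a' b' ->
     (a = a' /\ b = b') \/ (a = b' /\ b = a')) ->
  path e x p -> uniq (x :: p) -> uniq (pairmap f x p).
Proof.
move=> f_inj; elim: p x => [|y p IH] x //= /andP [exy pp] /andP [xp up].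
rewrite IH // andbT; apply/negP => /(mem_pairmap_path pp) [a [b [ap bp eab E]]].
by case: (f_inj _ _ _ _ exy eab E) => -[xa _]; move: xp; rewrite xa ?ap ?bp.
Qed.

Lemma all_pairmap (T U : Type) (e : rel T) (f : T -> T -> U) (a : pred U) x p :
  (forall y z, e y z -> a (f y z)) -> path e x p -> all a (pairmap f x p).
Proof.
by move=> ef; elim: p x => [|y p IH] x //= /andP [/ef -> /IH ->].
Qed.

Definition box (k : int) (v : vertex) : bool :=
  [&& -k <= v.1, v.1 <= k, 0 <= v.2 & v.2 <= 2 * k].

Lemma edge_of_up x y : edge_of (x, y) (x, y + 1) = (x, y, true).
Proof.
rewrite /edge_of /=; have -> : (y == y + 1) = false by lia.
by have -> : Order.min y (y + 1) = y by lia.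
Qed.

Lemma edge_of_right x y : edge_of (x, y) (x + 1, y) = (x, y, false).
Proof. by rewrite /edge_of /= eqxx; have -> : Order.min x (x + 1) = x by lia. Qed.

Lemma nn_up x y : nn (x, y) (x, y + 1). Proof. rewrite /nn /=; lia. Qed.
Lemma nn_right x y : nn (x, y) (x + 1, y). Proof. rewrite /nn /=; lia. Qed.

Lemma nn_sym (u v : vertex) : nn u v = nn v u.
Proof. by rewrite /nn distrC [`|u.2 - v.2|]distrC. Qed.

Lemma edge_of_sym (u v : vertex) : nn u v -> edge_of u v = edge_of v u.
Proof.
case: u v => [x y] [x' y']; rewrite /nn /edge_of /= => uv.
case: ifP => E; rewrite eq_sym E; first by move/eqP: E => ->; rewrite minC.
have -> : x = x' by move/negbT: E; lia.
by rewrite minC.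
Qed.

(** * Dual paths in a coloured annulus *)

(* Unit faces (dual vertices) are named by their lower-left corner; direction
   d < 4 encodes the dual steps right, left, up, down. *)
Definition neighbour (q : vertex) (d : nat) : vertex :=
  nth (q.1, q.2 - 1) [:: (q.1 + 1, q.2); (q.1 - 1, q.2); (q.1, q.2 + 1)] d.

Definition direction (a b : vertex) : nat :=
  if b.1 == a.1 + 1 then 0 else if b.1 == a.1 - 1 then 1
  else if b.2 == a.2 + 1 then 2 else 3.

Lemma directionE x y :
  [/\ direction (x, y) (x + 1, y) = 0%N, direction (x, y) (x - 1, y) = 1%N,
      direction (x, y) (x, y + 1) = 2%N & direction (x, y) (x, y - 1) = 3%N].
Proof. by split; rewrite /direction /=; repeat (case: eqP => //=); lia. Qed.

Lemma direction_lt4 a b : (direction a b < 4)%N.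
Proof. by rewrite /direction; repeat case: ifP. Qed.

Definition crossed_edge (a b : vertex) : edge :=
  nth (a.1, a.2, false) [:: (a.1 + 1, a.2, true); (a.1, a.2, true); (a.1, a.2 + 1, false)]
    (direction a b).

Definition edge_faces (e : edge) : vertex * vertex :=
  if e.2 then ((e.1.1 - 1, e.1.2), (e.1.1, e.1.2))
  else ((e.1.1, e.1.2 - 1), (e.1.1, e.1.2)).

Definition crossed_edges (q0 : vertex) (ds : seq nat) : seq edge :=
  pairmap crossed_edge q0 (scanl neighbour q0 ds).

Lemma size_crossed_edges q0 ds : size (crossed_edges q0 ds) = size ds.
Proof. by rewrite size_pairmap size_scanl. Qed.

Section Annulus.
Variables (n m : nat).
Hypothesis lt_mn : (m < n)%N.
Local Notation N := (n%:Z).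
Local Notation M := (m%:Z).

Definition annulus (v : vertex) : bool := box N v && ~~ box M v.

Variable c : vertex -> bool.
Hypothesis c_left_foot : forall u : vertex, u.2 = 0 -> -N <= u.1 <= -M - 1 -> c u.
Hypothesis c_right_foot : forall u : vertex, u.2 = 0 -> M + 1 <= u.1 <= N -> ~~ c u.

Definition separated (a b : vertex) := [&& annulus a, annulus b & c a (+) c b].
Definition cut_vert (q : vertex) := separated q (q.1, q.2 + 1).
Definition cut_horiz (q : vertex) := separated q (q.1 + 1, q.2).

Definition face_parity (q : vertex) :=
  cut_horiz q (+) cut_horiz (q.1, q.2 + 1) (+) cut_vert q (+) cut_vert (q.1 + 1, q.2).

(* The grid consists of the unit faces of [-n-1, n+1] x [-1, 2n+1]; every
   edge of the annulus bounds two of them. *)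
Definition grid_size := (2 * n).+2.
Definition grid_x (i : nat) : int := i%:Z - N - 1.
Definition grid_y (j : nat) : int := j%:Z - 1.
Definition grid_xor (F : vertex -> bool) :=
  \big[addb/false]_(i < grid_size) \big[addb/false]_(j < grid_size) F (grid_x i, grid_y j).

Lemma eq_grid_xor F G : F =1 G -> grid_xor F = grid_xor G.
Proof. by move=> FG; apply: eq_bigr => i _; apply: eq_bigr => j _. Qed.

Lemma grid_xor_addb F G : grid_xor (fun q => F q (+) G q) = grid_xor F (+) grid_xor G.
Proof. by rewrite /grid_xor -big_split; apply: eq_bigr => i _; rewrite -big_split. Qed.

Lemma grid_xor_shift_up F :
  (forall x, F (x, grid_y 0) = false) -> (forall x, F (x, grid_y grid_size) = false) ->
  grid_xor (fun q => F (q.1, q.2 + 1)) = grid_xor F.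
Proof.
move=> F0 FW; apply: eq_bigr => i _.
rewrite (eq_bigr (fun j : 'I__ => F (grid_x i, grid_y j.+1))); last first.
  by move=> j _ /=; congr F; congr pair; rewrite /grid_y; lia.
by rewrite (big_addb_shift (fun j => F (grid_x i, grid_y j))) F0 FW !addbF.
Qed.

Lemma grid_xor_shift_right F :
  (forall y, F (grid_x 0, y) = false) -> (forall y, F (grid_x grid_size, y) = false) ->
  grid_xor (fun q => F (q.1 + 1, q.2)) = grid_xor F.
Proof.
move=> F0 FW; rewrite /grid_xor.
rewrite (eq_bigr (fun i : 'I__ =>
    \big[addb/false]_(j < grid_size) F (grid_x i.+1, grid_y j))); last first.
  move=> i _; apply: eq_bigr => j _ /=; congr F; congr pair; rewrite /grid_x; lia.
rewrite (big_addb_shift (fun i => \big[addb/false]_(j < grid_size) F (grid_x i, grid_y j))).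
have -> : \big[addb/false]_(j < grid_size) F (grid_x 0, grid_y j) = false by rewrite big1.
have -> : \big[addb/false]_(j < grid_size) F (grid_x grid_size, grid_y j) = false.
  by rewrite big1.
by rewrite !addbF.
Qed.

Lemma cut_horiz_below x y : y < 0 -> cut_horiz (x, y) = false.
Proof. by move=> y0; rewrite /cut_horiz /separated /annulus /box /=; apply/negP; lia. Qed.

Lemma cut_horiz_above x y : 2 * N < y -> cut_horiz (x, y) = false.
Proof. by move=> yN; rewrite /cut_horiz /separated /annulus /box /=; apply/negP; lia. Qed.

Lemma cut_vert_left x y : x < - N -> cut_vert (x, y) = false.
Proof. by move=> xN; rewrite /cut_vert /separated /annulus /box /=; apply/negP; lia. Qed.

Lemma cut_vert_right x y : N < x -> cut_vert (x, y) = false.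
Proof. by move=> xN; rewrite /cut_vert /separated /annulus /box /=; apply/negP; lia. Qed.

(* Every cut edge bounds two faces of the grid, so it is counted twice. *)
Lemma handshake (k : vertex -> bool) :
  (forall q, cut_vert q -> k q = k (q.1 - 1, q.2)) ->
  (forall q, cut_horiz q -> k q = k (q.1, q.2 - 1)) ->
  grid_xor (fun q => k q && face_parity q) = false.
Proof.
move=> k_vert k_horiz.
have top : grid_xor (fun q => k q && cut_horiz (q.1, q.2 + 1)) =
           grid_xor (fun q => k q && cut_horiz q).
  rewrite -[RHS](grid_xor_shift_up (F := fun q => k q && cut_horiz q)).
  - apply: eq_grid_xor => -[x y] /=; case E: (cut_horiz (x, y + 1)); last by rewrite !andbF.
    by rewrite (k_horiz _ E) /= addrK.
  - by move=> x; rewrite cut_horiz_below ?andbF // /grid_y.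
  - by move=> x; rewrite cut_horiz_above ?andbF // /grid_y /grid_size; lia.
have right : grid_xor (fun q => k q && cut_vert (q.1 + 1, q.2)) =
             grid_xor (fun q => k q && cut_vert q).
  rewrite -[RHS](grid_xor_shift_right (F := fun q => k q && cut_vert q)).
  - apply: eq_grid_xor => -[x y] /=; case E: (cut_vert (x + 1, y)); last by rewrite !andbF.
    by rewrite (k_vert _ E) /= addrK.
  - by move=> y; rewrite cut_vert_left ?andbF // /grid_x; lia.
  - by move=> y; rewrite cut_vert_right ?andbF // /grid_x /grid_size; lia.
have -> : grid_xor (fun q => k q && face_parity q) =
  grid_xor (fun q => k q && cut_horiz q) (+) grid_xor (fun q => k q && cut_horiz (q.1, q.2 + 1))
  (+) grid_xor (fun q => k q && cut_vert q) (+) grid_xor (fun q => k q && cut_vert (q.1 + 1, q.2)).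
  by rewrite -!grid_xor_addb; apply: eq_grid_xor => q; rewrite /face_parity !andb_addr.
by rewrite top right addbb addFb addbb.
Qed.

Definition outer_face (q : vertex) :=
  [&& -N <= q.1, q.1 <= N - 1, 0 <= q.2 & q.2 <= 2 * N - 1].

Definition annulus_face (q : vertex) :=
  [&& annulus q, annulus (q.1 + 1, q.2), annulus (q.1, q.2 + 1) & annulus (q.1 + 1, q.2 + 1)].

Lemma separatedE a b : annulus a -> annulus b -> separated a b = c a (+) c b.
Proof. by rewrite /separated => -> ->. Qed.

Lemma annulus_face_parity q : annulus_face q -> face_parity q = false.
Proof.
case: q => x y /and4P [a1 a2 a3 a4].
rewrite /face_parity /cut_vert /cut_horiz /= !separatedE //.
by case: (c (x, y)); case: (c (x + 1, y)); case: (c (x, y + 1)); case: (c (x + 1, y + 1)).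
Qed.

Lemma cut_horiz_floor x : cut_horiz (x, 0) = false.
Proof.
rewrite /cut_horiz /separated /=.
case A0: (annulus (x, 0)); case A1: (annulus (x + 1, 0)) => //=.
move: A0 A1; rewrite /annulus /box /= => A0 A1.
have [xl|xr] : (x + 1 <= -M - 1) \/ (M + 1 <= x) by lia.
  by rewrite !c_left_foot //=; lia.
by rewrite (negbTE (c_right_foot _ _)) ?(negbTE (@c_right_foot (x + 1, 0) _ _)) //=; lia.
Qed.

Lemma grid_xor_outer_face F : grid_xor (fun q => outer_face q && F q) =
  \big[addb/false]_(i < 2 * n) \big[addb/false]_(j < 2 * n) F (grid_x i.+1, grid_y j.+1).
Proof.
rewrite -(big_addb_interior (fun i => \big[addb/false]_(j < 2 * n) F (grid_x i, grid_y j.+1))).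
apply: eq_bigr => i _.
case Hi: ((0 < i)%N && (i <= 2 * n)%N) => /=.
  rewrite -(big_addb_interior (fun j => F (grid_x i, grid_y j))); apply: eq_bigr => j _.
  congr (_ && _); rewrite /outer_face /grid_x /grid_y /=.
  by move: Hi; move: (nat_of_ord i) (nat_of_ord j) => a b Hi; apply/idP/idP; lia.
rewrite big1 // => j _; rewrite /outer_face /grid_x /grid_y /=.
by apply/negbTE/negP; move: Hi; move: (nat_of_ord i) (nat_of_ord j) => a b; lia.
Qed.

Lemma box_cut_horiz_xor :
  \big[addb/false]_(i < 2 * n)
      (cut_horiz (grid_x i.+1, grid_y 1) (+) cut_horiz (grid_x i.+1, grid_y (2 * n).+1))
  = c (- N, 2 * N) (+) c (N, 2 * N).
Proof.
rewrite big_split /= big1 => [|i _]; last by rewrite /grid_y subrr cut_horiz_floor.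
rewrite (eq_bigr (fun i : 'I_(2 * n) =>
    c (grid_x i.+1, 2 * N) (+) c (grid_x i.+2, 2 * N))); last first.
  move=> i _; rewrite /cut_horiz /=.
  have -> : grid_x i.+1 + 1 = grid_x i.+2 by rewrite /grid_x; lia.
  have -> : grid_y (2 * n).+1 = 2 * N by rewrite /grid_y; lia.
  rewrite separatedE // /annulus /box /grid_x /=; have := ltn_ord i; lia.
rewrite (big_addb_telescope (fun i => c (grid_x i.+1, 2 * N))) /=.
by congr (c (_, _) (+) c (_, _)); rewrite /grid_x; lia.
Qed.

Lemma box_cut_vert_xor :
  \big[addb/false]_(j < 2 * n)
      (cut_vert (grid_x 1, grid_y j.+1) (+) cut_vert (grid_x (2 * n).+1, grid_y j.+1))
  = c (- N, 0) (+) c (- N, 2 * N) (+) (c (N, 0) (+) c (N, 2 * N)).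
Proof.
have -> : grid_x 1 = - N by rewrite /grid_x; lia.
have -> : grid_x (2 * n).+1 = N by rewrite /grid_x; lia.
rewrite (eq_bigr (fun j : 'I_(2 * n) => (c (- N, grid_y j.+1) (+) c (- N, grid_y j.+2))
    (+) (c (N, grid_y j.+1) (+) c (N, grid_y j.+2)))); last first.
  move=> j _; rewrite /cut_vert /=.
  have -> : grid_y j.+1 + 1 = grid_y j.+2 by rewrite /grid_y; lia.
  rewrite !separatedE // /annulus /box /grid_y /=; have := ltn_ord j; lia.
rewrite big_split /= (big_addb_telescope (fun j => c (- N, grid_y j.+1))).
rewrite (big_addb_telescope (fun j => c (N, grid_y j.+1))) /=.
by have -> : grid_y (2 * n).+1 = 2 * N by rewrite /grid_y; lia.
Qed.

(* Summing face parities over the outer box leaves the cut edges on its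
   boundary, whose parity is that of the colour change c(-n,0) <> c(n,0). *)
Lemma outer_face_parity_xor : grid_xor (fun q => outer_face q && face_parity q) = true.
Proof.
rewrite grid_xor_outer_face.
rewrite (eq_bigr (fun i : 'I_(2 * n) => \big[addb/false]_(j < 2 * n)
   ((cut_horiz (grid_x i.+1, grid_y j.+1) (+) cut_horiz (grid_x i.+1, grid_y j.+2)) (+)
    (cut_vert (grid_x i.+1, grid_y j.+1) (+) cut_vert (grid_x i.+2, grid_y j.+1))))); last first.
  move=> i _; apply: eq_bigr => j _; rewrite /face_parity /=.
  have -> : grid_x i.+1 + 1 = grid_x i.+2 by rewrite /grid_x; lia.
  have -> : grid_y j.+1 + 1 = grid_y j.+2 by rewrite /grid_y; lia.
  by case: cut_horiz; case: cut_horiz; case: cut_vert; case: cut_vert.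
under eq_bigr => i _ do rewrite big_split /=.
rewrite big_split /= [X in _ (+) X]exchange_big /=.
have tele_horiz i : \big[addb/false]_(j < 2 * n)
    (cut_horiz (grid_x i.+1, grid_y j.+1) (+) cut_horiz (grid_x i.+1, grid_y j.+2))
  = cut_horiz (grid_x i.+1, grid_y 1) (+) cut_horiz (grid_x i.+1, grid_y (2 * n).+1).
  exact: (big_addb_telescope (fun j => cut_horiz (grid_x i.+1, grid_y j.+1))).
have tele_vert j : \big[addb/false]_(i < 2 * n)
    (cut_vert (grid_x i.+1, grid_y j.+1) (+) cut_vert (grid_x i.+2, grid_y j.+1))
  = cut_vert (grid_x 1, grid_y j.+1) (+) cut_vert (grid_x (2 * n).+1, grid_y j.+1).
  exact: (big_addb_telescope (fun i => cut_vert (grid_x i.+1, grid_y j.+1))).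
under eq_bigr => i _ do rewrite tele_horiz.
under [X in _ (+) X]eq_bigr => j _ do rewrite tele_vert.
rewrite box_cut_horiz_xor box_cut_vert_xor.
have -> : c (- N, 0) by apply: c_left_foot => //=; lia.
have -> : c (N, 0) = false by apply/negbTE/c_right_foot => //=; lia.
by case: (c (- N, 2 * N)); case: (c (N, 2 * N)).
Qed.

Lemma outside_face_parity_xor :
  grid_xor (fun q => ~~ outer_face q && face_parity q) = true.
Proof.
have -> : grid_xor (fun q => ~~ outer_face q && face_parity q) =
    grid_xor (fun q => true && face_parity q) (+)
    grid_xor (fun q => outer_face q && face_parity q).
  by rewrite -grid_xor_addb; apply: eq_grid_xor => q; case: outer_face; case: face_parity.
by rewrite handshake // outer_face_parity_xor.
Qed.

Definition dual_step (a b : vertex) : bool :=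
  [|| (b == (a.1 + 1, a.2)) && cut_vert b, (b == (a.1 - 1, a.2)) && cut_vert a,
      (b == (a.1, a.2 + 1)) && cut_horiz b | (b == (a.1, a.2 - 1)) && cut_horiz a].

Lemma dual_step_sym : symmetric dual_step.
Proof.
suff step_sym a b : dual_step a b -> dual_step b a by move=> a b; apply/idP/idP; apply: step_sym.
case: a => x y; case/or4P => /andP [/eqP -> cut]; apply/or4P.
- by constructor 2; rewrite /= addrK eqxx.
- by constructor 1; rewrite /= subrK eqxx.
- by constructor 4; rewrite /= addrK eqxx.
- by constructor 3; rewrite /= subrK eqxx.
Qed.

(* If every face of the outer box reachable from outside were an annulus face,
   the handshake lemma applied to reachability would contradict
   [outside_face_parity_xor]. *)
Lemma dual_path_to_inner_face : exists q0 p, [/\ ~~ outer_face q0, path dual_step q0 p,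
  outer_face (last q0 p) & ~~ annulus_face (last q0 p)].
Proof.
apply: contrapT => no_path.
pose k q := `[< exists q0 p, [/\ ~~ outer_face q0, path dual_step q0 p & last q0 p = q] >].
have k_step a b : dual_step a b -> k a = k b.
  have k_step1 a' b' : dual_step a' b' -> k a' -> k b'.
    move=> ab /asboolP [q0 [p [out0 pp lastp]]]; apply/asboolP.
    by exists q0, (rcons p b'); rewrite rcons_path last_rcons lastp pp ab.
  by move=> ab; apply/idP/idP; apply: k_step1; rewrite // dual_step_sym.
have k_vert q : cut_vert q -> k q = k (q.1 - 1, q.2).
  by move=> cut; apply: k_step; apply/or4P; constructor 2; rewrite eqxx.
have k_horiz q : cut_horiz q -> k q = k (q.1, q.2 - 1).
  by move=> cut; apply: k_step; apply/or4P; constructor 4; rewrite eqxx.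
have := handshake k_vert k_horiz.
rewrite (eq_grid_xor (G := fun q => ~~ outer_face q && face_parity q)).
  by rewrite outside_face_parity_xor.
move=> q; case out: (outer_face q) => /=; last first.
  by have -> : k q by apply/asboolP; exists q, [::]; rewrite out.
case inner: (annulus_face q); first by rewrite annulus_face_parity // andbF.
suff -> : k q = false by [].
apply/negbTE/negP => /asboolP [q0 [p [out0 pp lastp]]].
by apply: no_path; exists q0, p; rewrite lastp out inner.
Qed.

Lemma dual_step_lipschitz a b : dual_step a b ->
  [/\ b.1 <= a.1 + 1, a.1 <= b.1 + 1, b.2 <= a.2 + 1 & a.2 <= b.2 + 1].
Proof. by case/or4P => /andP [/eqP -> _] /=; split; lia. Qed.

(* The floor edges are never cut, so a dual path cannot enter the outer box
   from below. *)
Lemma dual_step_from_outside q0 q1 : ~~ outer_face q0 -> dual_step q0 q1 ->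
  q0.1 + N + 1 <= 0 \/ N - q0.1 <= 0 \/ 2 * N - q0.2 <= 0.
Proof.
case: q0 => x y; rewrite /outer_face /= => out.
case/or4P => /andP [/eqP E cut]; subst q1.
- by move: cut; rewrite /cut_vert /separated /annulus /box /= => /and3P [a b _]; lia.
- by move: cut; rewrite /cut_vert /separated /annulus /box /= => /and3P [a b _]; lia.
- case: (eqVneq (y + 1) 0) cut => [->|y1]; first by rewrite cut_horiz_floor.
  by rewrite /cut_horiz /separated /annulus /box /= => /and3P [a b _]; lia.
- by move: cut; rewrite /cut_horiz /separated /annulus /box /= => /and3P [a b _]; lia.
Qed.

Lemma inner_face_far q : outer_face q -> ~~ annulus_face q ->
  [/\ (n - m)%:Z <= q.1 + N + 1, (n - m)%:Z <= N - q.1 & (n - m)%:Z <= 2 * N - q.2].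
Proof.
by case: q => x y; rewrite /outer_face /annulus_face /annulus /box /= => ? ?; split; lia.
Qed.

Lemma dual_path_long q0 p : ~~ outer_face q0 -> path dual_step q0 p ->
  outer_face (last q0 p) -> ~~ annulus_face (last q0 p) -> (n - m <= size p)%N.
Proof.
case: p => [|q1 p] /=; first by move=> /negbTE ->.
move=> out0 /andP [step1 pp] in_last far_last.
have [f1 f2 f3] := inner_face_far in_last far_last.
have lip f : (forall a b, dual_step a b -> f b <= f a + 1) ->
    f (last q1 p) <= f q0 + (size p).+1%:Z.
  by move=> f_lip; apply: (path_lipschitz f_lip (x := q0) (p := q1 :: p)); rewrite /= step1.
have L1 : (last q1 p).1 + N + 1 <= q0.1 + N + 1 + (size p).+1%:Z.
  by apply: (lip (fun q => q.1 + N + 1)) => a b /dual_step_lipschitz []; lia.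
have L2 : N - (last q1 p).1 <= N - q0.1 + (size p).+1%:Z.
  by apply: (lip (fun q => N - q.1)) => a b /dual_step_lipschitz []; lia.
have L3 : 2 * N - (last q1 p).2 <= 2 * N - q0.2 + (size p).+1%:Z.
  by apply: (lip (fun q => 2 * N - q.2)) => a b /dual_step_lipschitz []; lia.
by case: (dual_step_from_outside out0 step1); lia.
Qed.

Definition near_box (q : vertex) :=
  [&& -N - 1 <= q.1, q.1 <= N, -1 <= q.2 & q.2 <= 2 * N].

Lemma dual_step_near_box a b : dual_step a b -> near_box a && near_box b.
Proof.
case: a => x y; case/or4P => /andP [/eqP -> cut]; move: cut;
  rewrite /near_box /cut_vert /cut_horiz /separated /annulus /box /= => /and3P [a1 a2 _]; lia.
Qed.

Lemma dual_path_near_box q0 p : path dual_step q0 p -> p != [::] -> all near_box (q0 :: p).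
Proof.
case: p => // q1 p /= /andP [step1 pp] _.
case/andP: (dual_step_near_box step1) => -> near1 /=; rewrite near1.
by apply: path_all_rhs pp => a b /dual_step_near_box /andP [].
Qed.

Definition grid_vertices : seq vertex :=
  [seq (grid_x i, grid_y j) | i <- iota 0 grid_size, j <- iota 0 grid_size].

Lemma mem_grid_vertices q : near_box q -> q \in grid_vertices.
Proof.
case: q => x y; rewrite /near_box /= => near.
have -> : (x, y) = (grid_x (absz (x + N + 1)), grid_y (absz (y + 1))).
  by rewrite /grid_x /grid_y; congr pair; lia.
by apply: allpairs_f; rewrite mem_iota /grid_size; lia.
Qed.

Lemma size_grid_vertices : size grid_vertices = (grid_size * grid_size)%N.
Proof. by rewrite size_allpairs size_iota. Qed.

Lemma neighbour_direction a b : dual_step a b -> neighbour a (direction a b) = b.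
Proof.
case: a => x y; have [d0 d1 d2 d3] := directionE x y.
by case/or4P => /andP [/eqP -> _]; rewrite ?d0 ?d1 ?d2 ?d3.
Qed.

Lemma scanl_neighbour_direction q0 p :
  path dual_step q0 p -> scanl neighbour q0 (pairmap direction q0 p) = p.
Proof.
elim: p q0 => [|b p IH] q0 //= /andP [step pp].
by rewrite neighbour_direction // IH.
Qed.

Lemma crossed_edgeK a b : dual_step a b ->
  edge_faces (crossed_edge a b) = (a, b) \/ edge_faces (crossed_edge a b) = (b, a).
Proof.
case: a => x y; have [d0 d1 d2 d3] := directionE x y.
case/or4P => /andP [/eqP -> _]; rewrite /crossed_edge ?d0 ?d1 ?d2 ?d3 /edge_faces /=.
- by rewrite addrK; left.
- by right.
- by rewrite addrK; left.
- by right.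
Qed.

Lemma crossed_edge_inj a b a' b' : dual_step a b -> dual_step a' b' ->
  crossed_edge a b = crossed_edge a' b' -> (a = a' /\ b = b') \/ (a = b' /\ b = a').
Proof.
move=> ab ab' E; case: (crossed_edgeK ab) => F; case: (crossed_edgeK ab') => F';
  rewrite E F' in F; case: F => -> ->; by [left | right].
Qed.

Variable isopen : edge -> bool.
Hypothesis c_open : forall u v, annulus u -> annulus v -> nn u v ->
  isopen (edge_of u v) -> c u = c v.

Lemma separated_closed u v : separated u v -> nn u v -> ~~ isopen (edge_of u v).
Proof.
case/and3P => au av cuv uv; apply/negP => uv_open.
by move: cuv; rewrite (c_open au av uv uv_open) addbb.
Qed.

Lemma cut_vert_closed x y : cut_vert (x, y) -> inEH (x, y, true) && ~~ isopen (x, y, true).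
Proof.
move=> cut; have := separated_closed cut (nn_up x y); rewrite edge_of_up => -> /=.
by move: cut; rewrite /cut_vert /separated /annulus /box /inEH /= => /and3P [a _ _]; lia.
Qed.

Lemma cut_horiz_closed x y :
  cut_horiz (x, y) -> inEH (x, y, false) && ~~ isopen (x, y, false).
Proof.
move=> cut; have := separated_closed cut (nn_right x y); rewrite edge_of_right => -> /=.
by move: cut; rewrite /cut_horiz /separated /annulus /box /inEH /= => /and3P [a _ _]; lia.
Qed.

Lemma crossed_edge_closed a b : dual_step a b ->
  inEH (crossed_edge a b) && ~~ isopen (crossed_edge a b).
Proof.
case: a => x y; have [d0 d1 d2 d3] := directionE x y.
case/or4P => /andP [/eqP -> cut]; rewrite /crossed_edge ?d0 ?d1 ?d2 ?d3 /=.
- exact: cut_vert_closed.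
- exact: cut_vert_closed.
- exact: cut_horiz_closed.
- exact: cut_horiz_closed.
Qed.

Lemma closed_dual_path : exists q0 ds, [/\ q0 \in grid_vertices, (n - m <= size ds)%N,
  (size ds < grid_size * grid_size)%N, all (fun d => d < 4)%N ds &
  uniq (crossed_edges q0 ds) && all (fun e => inEH e && ~~ isopen e) (crossed_edges q0 ds)].
Proof.
have [q0 [p [out0 pp in_last far_last]]] := dual_path_to_inner_face.
move: in_last far_last; case: (shortenP pp) => p' pp' uniq_p' _ in_last far_last.
have p'_nil : p' != [::] by case: p' {pp' uniq_p'} in_last far_last => //=; rewrite (negbTE out0).
have near := dual_path_near_box pp' p'_nil.
exists q0, (pairmap direction q0 p'); rewrite /crossed_edges scanl_neighbour_direction //.
rewrite size_pairmap; split.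
- by apply: mem_grid_vertices; case/andP: near.
- exact: dual_path_long out0 pp' in_last far_last.
- rewrite -size_grid_vertices; apply: (uniq_leq_size uniq_p').
  by move=> q /(allP near) /mem_grid_vertices.
- by apply: (all_pairmap (e := dual_step)) => // a b _; apply: direction_lt4.
- rewrite (pairmap_uniq crossed_edge_inj pp' uniq_p') /=.
  by apply: all_pairmap pp' => a b; apply: crossed_edge_closed.
Qed.

End Annulus.

(** * The annuli A_n and open clusters *)

Fixpoint isqrt (n : nat) : nat :=
  if n is n'.+1 then
    let r := isqrt n' in if (r.+1 * r.+1 <= n'.+1)%N then r.+1 else r
  else 0.

Lemma isqrt_spec n : (isqrt n * isqrt n <= n < (isqrt n).+1 * (isqrt n).+1)%N.
Proof. by elim: n => [|n IH] //=; case: ifP => h; nia. Qed.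

Lemma isqrt_gt0 n : (0 < n)%N -> (0 < isqrt n)%N.
Proof. by have := isqrt_spec n; nia. Qed.

Lemma isqrt_le n : (isqrt n <= n)%N.
Proof. by have := isqrt_spec n; nia. Qed.

Lemma isqrt_le_sqrt (R : realType) n : ((isqrt n)%:R : R) <= Num.sqrt n%:R.
Proof.
rewrite -(ger0_norm (ler0n R (isqrt n))) -sqrtr_sqr; apply: ler_wsqrtr.
by rewrite -natrX ler_nat; have := isqrt_spec n; nia.
Qed.

Lemma inB_le (R : realType) (r s : R) v : r <= s -> inB r v -> inB s v.
Proof.
rewrite /inB => rs /andP [/andP [x_le y_ge0] y_le].
by rewrite (le_trans x_le rs) y_ge0 (le_trans y_le) // ler_wpM2l.
Qed.

Lemma inB_natr (R : realType) (k : nat) v : inB (k%:R : R) v = box k v.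
Proof.
rewrite /inB /box ler_norml -[(k%:R : R)]/((k%:Z)%:~R) -intrN !ler_int ler0z.
by rewrite -[2 * _](intrM R 2 k) ler_int -!andbA.
Qed.

Lemma annulus_inA (R : realType) n v : annulus n (n - isqrt n) v -> @inA R n v.
Proof.
rewrite /annulus /inA => /andP [outer inner]; rewrite inB_natr outer /=.
apply: contra inner => in_small; rewrite -(inB_natr R) natrB ?isqrt_le //.
by apply: inB_le in_small; rewrite lerD2l lerN2 isqrt_le_sqrt.
Qed.

Section Reachability.
Variables (isopen : edge -> bool) (S src : pred vertex).

Definition open_path_in (u : vertex) (p : seq vertex) :=
  path (fun a b => [&& nn a b, isopen (edge_of a b) & S b]) u p.

Definition reachable (v : vertex) : bool :=
  `[< exists u p, [/\ src u, open_path_in u p & last u p = v] >].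

Lemma reachable_src u : src u -> reachable u.
Proof. by move=> src_u; apply/asboolP; exists u, [::]. Qed.

Lemma reachable_open u v : S u -> S v -> nn u v -> isopen (edge_of u v) ->
  reachable u = reachable v.
Proof.
have step a b : S b -> nn a b -> isopen (edge_of a b) -> reachable a -> reachable b.
  move=> Sb ab ab_open /asboolP [u0 [p [src0 pp lastp]]]; apply/asboolP.
  exists u0, (rcons p b); move: pp.
  by rewrite /open_path_in rcons_path last_rcons lastp ab ab_open Sb => ->.
move=> Su Sv uv uv_open; apply/idP/idP; first exact: step.
apply: step => //; first by rewrite nn_sym.
by rewrite -edge_of_sym.
Qed.

End Reachability.

Section NoEnclosingCircuit.
Variables (R : realType) (Omega : Type) (omega : edge -> Omega -> R) (D : R).
Variables (n : nat) (w : Omega).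
Hypothesis n_gt0 : (0 < n)%N.
Hypothesis no_circuit : no_enclosing_half_circuit omega D n w.

Local Notation m := (n - isqrt n)%N.

Definition left_foot (u : vertex) := (u.2 == 0) && (- n%:Z <= u.1 <= - m%:Z - 1).

Let isopen (e : edge) := omega e w <= D.
Let colour := reachable isopen (annulus n m) left_foot.

Lemma left_foot_annulus u : left_foot u -> annulus n m u.
Proof. by case: u => x y; rewrite /left_foot /annulus /box /=; lia. Qed.

Lemma right_foot_uncoloured (u : vertex) : u.2 = 0 -> m%:Z + 1 <= u.1 <= n%:Z -> ~~ colour u.
Proof.
move=> u_floor u_right; apply/negP => /asboolP [u0 [p [foot pp lastp]]].
apply: no_circuit; exists (u0 :: p).
have Sp : all (annulus n m) (u0 :: p).
  by rewrite /= left_foot_annulus //; apply: path_all_rhs pp => a b /and3P [].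
apply/andP; split.
  apply/and5P; split.
  - by apply/allP=> v /(allP Sp); case: v => x y; rewrite /annulus /box /=; lia.
  - by apply: sub_path pp => a b /and3P [-> ab_open _].
  - by case/andP: foot.
  - by rewrite lastp u_floor.
  - by apply/allP => v /(allP Sp) /annulus_inA.
apply/andP; split.
  by apply/negP => /(allP Sp); rewrite /annulus /box /=; lia.
by apply/orP; left; rewrite lastp; move: foot; rewrite /left_foot; lia.
Qed.

Lemma no_circuit_closed_dual_path : exists q0 ds,
  [/\ q0 \in grid_vertices n, (isqrt n <= size ds)%N,
      (size ds < grid_size n * grid_size n)%N, all (fun d => d < 4)%N ds &
      uniq (crossed_edges q0 ds) &&
      all (fun e => inEH e && (D < omega e w)) (crossed_edges q0 ds)].
Proof.
have lt_mn : (m < n)%N by have := isqrt_gt0 n_gt0; lia.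
have c_left u : u.2 = 0 -> - n%:Z <= u.1 <= - m%:Z - 1 -> colour u.
  by move=> u_floor u_left; apply: reachable_src; rewrite /left_foot u_floor eqxx.
have c_open u v : annulus n m u -> annulus n m v -> nn u v -> isopen (edge_of u v) ->
    colour u = colour v.
  exact: reachable_open.
have [q0 [ds [q0_grid long short dirs /andP [uniq_ds closed]]]] :=
  closed_dual_path lt_mn c_left right_foot_uncoloured c_open.
exists q0, ds; split => //; first by rewrite subKn ?isqrt_le in long.
by rewrite uniq_ds; apply: sub_all closed => e /andP [-> /=]; rewrite /isopen -ltNge.
Qed.

End NoEnclosingCircuit.

(** * Summability of the Peierls bound *)

Section PeierlsSeries.
Variable R : realType.

Definition peierls_bound (n : nat) : R :=
  (grid_size n * grid_size n)%:R * (5 * (4 / 5) ^+ isqrt n).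

Definition block_bound (r : nat) : R := 20 * r.+1%:R ^+ 4 * (4 / 5) ^+ r.

Lemma block_bound_ge0 r : 0 <= block_bound r.
Proof. by rewrite /block_bound !mulr_ge0 ?exprn_ge0. Qed.

Lemma peierls_bound_le n : peierls_bound n <= block_bound (isqrt n).
Proof.
have := isqrt_spec n; rewrite /peierls_bound /block_bound; set r := isqrt n => r_spec.
have grid_le : ((grid_size n * grid_size n)%N%:R : R) <= 4 * r.+1%:R ^+ 4.
  by rewrite -natrX -natrM ler_nat /grid_size; nia.
have geo_ge0 : (0 : R) <= (4 / 5) ^+ r by rewrite exprn_ge0.
move: grid_le geo_ge0; move: (_%:R : R) (r.+1%:R ^+ 4 : R) ((4 / 5 : R) ^+ r) => a b y.
by move=> ab y0; nra.
Qed.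

(* [potential_poly] solves 5 P(z) - 4 P(z + 1) = (2z + 1) (z + 1)^4, so that
   [potential r] - [potential r.+1] is the total bound of the 2r + 1 indices n
   with isqrt n = r; [tail_potential] interpolates inside such a block.
   Large coefficients are written as products, since numerals are unary. *)
Definition potential_poly (z : R) : R :=
  2 * z ^+ 5 + 49 * z ^+ 4 + 880 * z ^+ 3 + 1183 * 10 * z ^+ 2 + 10603 * 10 * z
  + (4751 * 100 + 65).

Lemma potential_poly_step z :
  5 * potential_poly z - 4 * potential_poly (z + 1) = (2 * z + 1) * (z + 1) ^+ 4.
Proof. by rewrite /potential_poly; ring. Qed.

Definition potential (r : nat) : R := 100 * potential_poly r%:R * (4 / 5) ^+ r.

Lemma potential_ge0 r : 0 <= potential r.
Proof.
have r_ge0 : (0 : R) <= r%:R := ler0n R r.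
rewrite /potential /potential_poly.
(* Closing these goals with [//] would try to evaluate the unary numerals. *)
by repeat (exact: ler0n || assumption || apply: exprn_ge0 || apply: mulr_ge0
           || apply: addr_ge0 || apply: divr_ge0).
Qed.

Lemma potential_step r : potential r - potential r.+1 = (2 * r%:R + 1) * block_bound r.
Proof.
rewrite /potential /block_bound exprS -[(r.+1%:R : R)]natr1.
have := potential_poly_step r%:R.
move: (potential_poly r%:R) (potential_poly (r%:R + 1)) (r%:R : R) ((4 / 5 : R) ^+ r).
move=> a b z y step.
have -> : (2 * z + 1) * (20 * (z + 1) ^+ 4 * y) = 20 * y * ((2 * z + 1) * (z + 1) ^+ 4).
  by ring.
by rewrite -step; field.
Qed.

Definition tail_potential (n : nat) : R :=
  potential (isqrt n).+1 + ((isqrt n).+1 * (isqrt n).+1 - n)%N%:R * block_bound (isqrt n).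

Lemma tail_potential_ge0 n : 0 <= tail_potential n.
Proof.
by apply: addr_ge0; [exact: potential_ge0 | exact: mulr_ge0 (ler0n _ _) (block_bound_ge0 _)].
Qed.

Lemma tail_potential_step n : tail_potential n - tail_potential n.+1 = block_bound (isqrt n).
Proof.
have := isqrt_spec n; rewrite /tail_potential /=; set r := isqrt n => r_spec.
case: ifP => new_block.
  have -> : (r.+1 * r.+1 - n = 1)%N by lia.
  have -> : (r.+2 * r.+2 - n.+1 = (2 * r.+1).+1)%N by nia.
  have := potential_step r.+1; rewrite -[((2 * r.+1).+1)%:R]natr1 natrM.
  move: (potential r.+1) (potential r.+2) (block_bound r) (block_bound r.+1) (r.+1%:R : R).
  by move=> a b f g z step; lra.
have -> : (r.+1 * r.+1 - n = (r.+1 * r.+1 - n.+1).+1)%N by lia.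
rewrite -[((_ - _).+1)%:R]natr1.
by move: (_%:R : R) (potential r.+1) (block_bound r) => t a f; lra.
Qed.

Lemma sum_peierls_bound_le N : \sum_(0 <= n < N) peierls_bound n <= tail_potential 0.
Proof.
have tele : \sum_(0 <= n < N) block_bound (isqrt n) = tail_potential 0 - tail_potential N.
  elim: N => [|N IH]; first by rewrite big_geq // subrr.
  by rewrite big_nat_recr //= IH -(tail_potential_step N); lra.
apply: le_trans (_ : \sum_(0 <= n < N) block_bound (isqrt n) <= _).
  by apply: ler_sum => n _; apply: peierls_bound_le.
by rewrite tele lerBlDr lerDl tail_potential_ge0.
Qed.

End PeierlsSeries.

(** * The union bound *)

Definition direction_seqs (lo hi : nat) : seq (seq nat) :=
  flatten [seq [seq map (@nat_of_ord 4) (tval t) | t <- enum {: L.-tuple 'I_4}]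
          | L <- iota lo (hi - lo)].

Lemma mem_direction_seqs lo hi ds : (lo <= size ds < hi)%N ->
  all (fun d => d < 4)%N ds -> ds \in direction_seqs lo hi.
Proof.
move=> /andP [lo_ds ds_hi] ds_lt4; apply/flatten_mapP; exists (size ds).
  by rewrite mem_iota; lia.
have size_ds : size (map (@inord 3) ds) == size ds by rewrite size_map.
apply/mapP; exists (Tuple size_ds); first by rewrite mem_enum.
rewrite /= -map_comp; symmetry; apply: map_id_in => d d_ds /=.
by rewrite inordK //; apply: (allP ds_lt4).
Qed.

Lemma sum_direction_seqs (R : realType) lo hi :
  \sum_(ds <- direction_seqs lo hi) (1 / 5 : R) ^+ size ds <= 5 * (4 / 5) ^+ lo.
Proof.
rewrite big_flatten /= big_map.
have tuples L : \sum_(ds <- [seq map (@nat_of_ord 4) (tval t) | t <- enum {: L.-tuple 'I_4}])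
    (1 / 5 : R) ^+ size ds = (4 / 5) ^+ L.
  rewrite big_map big_enum /=.
  rewrite (eq_bigr (fun _ => (1 / 5 : R) ^+ L)) => [|t _]; last by rewrite size_map size_tuple.
  by rewrite sumr_const card_tuple card_ord -(mulr_natl _ (4 ^ L)) natrX -exprMn mul1r.
under eq_bigr => L _ do rewrite tuples.
have -> : iota lo (hi - lo) = index_iota lo (lo + (hi - lo)) by rewrite /index_iota addKn.
rewrite geometric_partial_tail; apply: le_trans (geometric_le_lim _ _ _ _) _.
- by rewrite exprn_ge0.
- by [].
- by rewrite ger0_norm // ltr_pdivrMr // mul1r ltr_nat.
by rewrite mulrC le_eqVlt; apply/orP; left; apply/eqP; field.
Qed.

Local Open Scope classical_set_scope.

Lemma measure_le_sum_cover d (T : measurableType d) (R : realType)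
    (mu : {measure set T -> \bar R}) (I : eqType) (s : seq I) (F : I -> set T) (B : set T) :
  measurable B -> (forall i, measurable (F i)) ->
  (forall w, B w -> exists2 i, i \in s & F i w) ->
  (mu B <= \sum_(i <- s) mu (F i))%E.
Proof.
elim: s B => [|i s IH] B mB mF cover.
  have -> : B = set0 by apply/seteqP; split => w // /cover [].
  by rewrite measure0 big_nil.
rewrite big_cons.
have mB' : measurable (B `&` ~` F i) by apply: measurableI => //; apply: measurableC.
apply: (@le_trans _ _ (mu (F i `|` (B `&` ~` F i)))).
  apply: le_measure; rewrite ?inE //; first exact: measurableU.
  by move=> w Bw; case: (pselect (F i w)) => Fw; [left | right].
apply: le_trans (measureU2 mu (mF i) mB') _.
apply: leeD2l; apply: IH => // w [Bw notFw].
have [j j_s Fjw] := cover w Bw; exists j => //.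
by move: j_s; rewrite inE => /orP [/eqP ej|//]; case: notFw; rewrite -ej.
Qed.

Section EdgeEvents.
Context (d : measure_display) (Omega : measurableType d) (R : realType)
  (omega : edge -> Omega -> R).
Hypothesis omega_measurable : forall e, inEH e -> measurable_fun setT (omega e).

Lemma all_edges_bigsetI (a : pred R) (s : seq edge) :
  [set w | all (fun e => a (omega e w)) s] =
  \big[setI/setT]_(e <- s) (omega e @^-1` [set x | a x]).
Proof.
elim: s => [|e s IH]; first by rewrite big_nil; apply/seteqP; split.
by rewrite big_cons -IH; apply/seteqP; split => w /=; [move/andP | move=> [-> ->]].
Qed.

Lemma measurable_all_edges (a : pred R) (s : seq edge) :
  measurable [set x | a x] -> all inEH s ->
  measurable [set w | all (fun e => a (omega e w)) s].
Proof.
move=> ma s_EH; rewrite all_edges_bigsetI big_seq; apply: bigsetI_measurable => e e_s.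
by rewrite -[X in measurable X]setTI; apply: (omega_measurable (allP s_EH e e_s)).
Qed.

Lemma inEH_pairmap_edge_of (v : vertex) q :
  all (fun u : vertex => 0 <= u.2) (v :: q) -> all inEH (pairmap edge_of v q).
Proof.
elim: q v => [|u q IH] v //= /and3P [v_ge0 u_ge0 q_ge0].
rewrite IH /= ?u_ge0 ?q_ge0 // andbT /inEH /edge_of.
by case: ifP => _ /=; lia.
Qed.

Lemma open_half_circuit_inE (isopen : edge -> bool) (S : vertex -> bool) v q :
  open_half_circuit_in isopen S (v :: q) =
  open_half_circuit_in predT S (v :: q) && all isopen (pairmap edge_of v q).
Proof.
rewrite /= (path_andb_pairmap nn edge_of isopen) (eq_path (e' := nn)) => [|a b]; last exact: andbT.
by case: (all isopen _); rewrite ?andbT ?andbF.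
Qed.

Lemma measurable_half_circuit_event D n p :
  measurable [set w | open_half_circuit_in (fun e => omega e w <= D) (@inA R n) p
                      && encloses_origin p].
Proof.
case: p => [|v q]; first by rewrite [X in measurable X](_ : _ = set0) //; apply/seteqP; split.
set shape := open_half_circuit_in predT (@inA R n) (v :: q) && encloses_origin (v :: q).
have -> : [set w | open_half_circuit_in (fun e => omega e w <= D) (@inA R n) (v :: q)
                   && encloses_origin (v :: q)] =
          [set w | shape && all (fun e => omega e w <= D) (pairmap edge_of v q)].
  apply: eq_set => w; rewrite open_half_circuit_inE /shape.
  by case: (all (fun e => omega e w <= D) (pairmap edge_of v q)); rewrite ?andbT ?andbF.
case shape_pq: shape => /=; last first.
  by rewrite [X in measurable X](_ : _ = set0) //; apply/seteqP; split.
apply: (measurable_all_edges (a := fun x => x <= D)).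
  by rewrite -set_itvNyc; exact: measurable_itv.
by apply: inEH_pairmap_edge_of; case/andP: shape_pq => /and5P [].
Qed.

Lemma measurable_no_enclosing D n : measurable (no_enclosing_half_circuit omega D n).
Proof.
pose event p := [set w | open_half_circuit_in (fun e => omega e w <= D) (@inA R n) p
                         && encloses_origin p].
have -> : no_enclosing_half_circuit omega D n =
    ~` \bigcup_(k in setT) event (odflt [::] (unpickle k)).
  apply/seteqP; split => w.
    by move=> none [k _ circuit]; apply: none; eexists; exact: circuit.
  by move=> none [p circuit]; apply: none; exists (pickle p) => //; rewrite pickleK.
by apply: measurableC; apply: bigcup_measurable => k _; apply: measurable_half_circuit_event.
Qed.

Definition closed_crossing (D : R) (q0 : vertex) (ds : seq nat) : set Omega :=
  [set w | uniq (crossed_edges q0 ds) &&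
           all (fun e => inEH e && (D < omega e w)) (crossed_edges q0 ds)].

Lemma closed_crossingE D q0 ds : closed_crossing D q0 ds =
  if uniq (crossed_edges q0 ds) && all inEH (crossed_edges q0 ds)
  then [set w | all (fun e => D < omega e w) (crossed_edges q0 ds)] else set0.
Proof.
rewrite /closed_crossing; case: ifP => crossing; apply/seteqP; split => w /=;
  rewrite (all_predI inEH (fun e => D < omega e w)).
- by case/and3P.
- by case/andP: crossing => -> ->.
- by case/and3P => uniq_s s_EH _; move: crossing; rewrite uniq_s s_EH.
- by [].
Qed.

Lemma measurable_closed_crossing D q0 ds : measurable (closed_crossing D q0 ds).
Proof.
rewrite closed_crossingE; case: ifP => [/andP [_ s_EH]|_]; last exact: measurable0.
apply: (measurable_all_edges (a := fun x => D < x)) s_EH.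
by rewrite -set_itvoy; exact: measurable_itv.
Qed.

End EdgeEvents.

Section IndependentTails.
Context (d : measure_display) (Omega : measurableType d) (R : realType)
  (P : probability Omega R) (omega : edge -> Omega -> R) (D : R).
Hypothesis omega_measurable : forall e, inEH e -> measurable_fun setT (omega e).
Hypothesis indep : mutually_independent P omega.
Hypothesis tail_le : forall e, inEH e ->
  (P [set w | (D < omega e w)%R] <= (1 / 5 : R)%:E)%E.

Lemma prod_tail_le (s : seq edge) : all inEH s ->
  (\prod_(e <- s) P (omega e @^-1` [set x | (D < x)%R]) <= ((1 / 5) ^+ size s)%:E)%E.
Proof.
elim: s => [|e s IH] /=; first by rewrite big_nil expr0.
move/andP => [e_EH s_EH]; rewrite big_cons exprS EFinM.
apply: lee_pmul; [exact: measure_ge0 | | exact: tail_le | exact: IH].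
by apply: prode_ge0 => ? _; exact: measure_ge0.
Qed.

Lemma closed_crossing_le q0 ds :
  (P (closed_crossing omega D q0 ds) <= ((1 / 5) ^+ size ds)%:E)%E.
Proof.
rewrite closed_crossingE; case: ifP => [/andP [uniq_s s_EH]|_]; last first.
  by rewrite measure0 lee_fin exprn_ge0 // divr_ge0.
rewrite (all_edges_bigsetI omega (fun x => D < x)) indep //; last first.
  by move=> _; rewrite -set_itvoy; exact: measurable_itv.
by rewrite -(size_crossed_edges q0 ds); apply: prod_tail_le.
Qed.

Lemma no_enclosing_le_peierls n : (0 < n)%N ->
  (P (no_enclosing_half_circuit omega D n) <= (peierls_bound R n)%:E)%E.
Proof.
move=> n_gt0.
pose crossings := [seq (q0, ds) | q0 <- grid_vertices n,
                    ds <- direction_seqs (isqrt n) (grid_size n * grid_size n)].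
apply: le_trans (measure_le_sum_cover P (s := crossings)
  (F := fun i => closed_crossing omega D i.1 i.2)
  (measurable_no_enclosing omega_measurable D n) _ _) _.
- by move=> i; apply: measurable_closed_crossing.
- move=> w none.
  have [q0 [ds [q0_grid long short dirs closed]]] := no_circuit_closed_dual_path n_gt0 none.
  exists (q0, ds) => //; apply: allpairs_f => //.
  by apply: mem_direction_seqs => //; rewrite long short.
apply: le_trans (@lee_sum _ _ _ _ crossings xpredT (fun i _ => closed_crossing_le i.1 i.2)) _.
rewrite sumEFin lee_fin big_allpairs /= big_const_seq count_predT iter_addr_0.
rewrite size_grid_vertices -(mulr_natl _ (grid_size n * grid_size n)) /peierls_bound.
by apply: ler_wpM2l => //; exact: sum_direction_seqs.
Qed.

End IndependentTails.

Theorem lemmaC5 (d : measure_display) (Omega : measurableType d)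
  (R : realType) (P : probability Omega R) (omega : edge -> Omega -> R)
  (D : R) :
  (forall e, inEH e -> measurable_fun setT (omega e)) ->
  (forall e w, inEH e -> 0 <= omega e w) ->
  mutually_independent P omega ->
  (forall e e' (B : set R), inEH e -> inEH e' -> measurable B ->
     P (omega e @^-1` B) = P (omega e' @^-1` B)) ->
  (forall e (x : R), inEH e -> P (omega e @^-1` [set x]) = 0%E) ->
  0 < D ->
  (forall e, inEH e -> (P [set w | (D < omega e w)%R] <= (1 / 5 : R)%:E)%E) ->
  (\sum_(0 <= n <oo) P (no_enclosing_half_circuit omega D n) < +oo)%E.
Proof.
move=> omega_measurable _ indep _ _ _ tail_le.
have bound n : (P (no_enclosing_half_circuit omega D n) <= (peierls_bound R n)%:E)%E.
  case: n => [|n]; last exact: no_enclosing_le_peierls.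
  apply: le_trans (probability_le1 P (measurable_no_enclosing omega_measurable D 0)) _.
  rewrite lee_fin /peierls_bound /= expr0 mulr1.
  by rewrite (_ : (4%:R : R) * 5 = 20%:R) ?ler1n // -natrM.
apply: (@le_lt_trans _ _ (tail_potential R 0)%:E); last exact: ltry.
apply: lime_le; first by apply: is_cvg_nneseries => k _ _; exact: measure_ge0.
apply: nearW => N; apply: le_trans (@lee_sum _ _ _ _ _ xpredT (fun k _ => bound k)) _.
by rewrite sumEFin lee_fin; exact: sum_peierls_bound_le.
Qed.
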